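(* Let $p$ be a prime and $\sigma$ a $p$-uniform morphism on $\mathcal A_m$. For every $n\in\mathbb{N}^*$, $$M_{\sigma^n}(T)=M_\sigma(T^{p^{n-1}})M_\sigma(T^{p^{n-2}})\cdots M_\sigma(T).$$
   Context: $\mathcal A_m=\{0,\dots,m-1\}$. For $W=w_0\cdots w_{r-1}\in\mathcal A_m^*$ and $j\in\mathcal A_m$, $\beta_{W,j}(T)=\sum_{i:\,w_i=j}T^{r-1-i}\in\mathbb{F}_p[T]$ (zero if $j$ does not occur). For a uniform morphism $\tau$ on $\mathcal A_m$, $M_\tau(T)=(\beta_{\tau(i),j}(T))_{0\le i,j\le m-1}$; $\sigma^n$ is again uniform (of length $p^n$). *)

From mathcomp Require Import all_boot all_order all_algebra.
Set Implicit Arguments. Unset Strict Implicit. Unset Printing Implicit Defensive.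
Import GRing.Theory.
Local Open Scope ring_scope.

Definition morph (m : nat) := 'I_m -> seq 'I_m.

Definition morph_word (m : nat) (tau : morph m) (w : seq 'I_m) : seq 'I_m :=
  flatten (map tau w).

Definition morph_iter (m : nat) (sigma : morph m) (n : nat) : morph m :=
  fun a => iter n (morph_word sigma) [:: a].

Definition uniform (m L : nat) (tau : morph m) : Prop :=
  forall a : 'I_m, size (tau a) = L.

Definition beta (R : nzRingType) (m : nat) (W : seq 'I_m) (j : 'I_m) : {poly R} :=
  \sum_(i < size W | nth j W i == j) 'X^(size W - 1 - i).

Definition Mmorph (R : nzRingType) (m : nat) (tau : morph m) : 'M[{poly R}]_m :=
  \matrix_(i, j) beta R (tau i) j.

Definition mx_subst (R : nzRingType) (m k : nat) (A : 'M[{poly R}]_m) : 'M[{poly R}]_m :=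
  map_mx (fun q => q \Po 'X^k) A.

(* M_sigma(T^{p^{n-1}}) M_sigma(T^{p^{n-2}}) ... M_sigma(T) *)
Definition Mprod (R : nzRingType) (m p n : nat) (sigma : morph m) : 'M[{poly R}]_m :=
  foldr (fun k A => mx_subst (p ^ k) (Mmorph R sigma) *m A) 1%:M (rev (iota 0 n)).

From mathcomp Require Import all_boot all_order all_algebra.
Import GRing.Theory.

Set Implicit Arguments.
Unset Strict Implicit.

(* A letter at distance d from the end of W contributes T^d to beta_W. Hence
   replacing every letter of W by a block of length L (an L-uniform tau)
   rescales these weights to T^(L d) and then adds the weights inside each
   block:  beta_{tau(W), j}(T) = sum_k beta_{W, k}(T^L) beta_{tau(k), j}(T).
   Applied to tau = sigma^n (of length p^n) and W = sigma(a), this reads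
   M_{sigma^(n+1)} = M_sigma(T^(p^n)) M_{sigma^n}, and the corollary follows by
   induction on n. *)

Local Open Scope ring_scope.

Section Morphisms.
Variable m : nat.

Lemma morph_word_cat (tau : morph m) u v :
  morph_word tau (u ++ v) = morph_word tau u ++ morph_word tau v.
Proof. by rewrite /morph_word map_cat flatten_cat. Qed.

Lemma morph_word_comp (s t : morph m) w :
  morph_word s (morph_word t w) = morph_word (fun a => morph_word s (t a)) w.
Proof.
elim: w => [|x w IH] //.
by rewrite /morph_word /= -!/(morph_word _ _) morph_word_cat IH.
Qed.

Lemma iter_morph_word (s : morph m) n w :
  iter n (morph_word s) w = morph_word (morph_iter s n) w.
Proof.
elim: n w => [|n IH] w /=; last by rewrite IH morph_word_comp.
by rewrite /morph_iter /=; elim: w => [|x w IHw] //=; rewrite {1}IHw.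
Qed.

Lemma morph_iterSr (s : morph m) n a :
  morph_iter s n.+1 a = morph_word (morph_iter s n) (s a).
Proof.
rewrite /morph_iter iterSr -/(morph_iter s n) iter_morph_word.
by rewrite /morph_word /= cats0.
Qed.

Lemma size_morph_word (tau : morph m) L w : uniform L tau ->
  size (morph_word tau w) = (L * size w)%N.
Proof.
move=> tauL; elim: w => [|x w IH]; first by rewrite muln0.
by rewrite /morph_word /= size_cat -/(morph_word tau w) IH tauL mulnS.
Qed.

Lemma uniform_morph_iter (s : morph m) L n : uniform L s ->
  uniform (L ^ n) (morph_iter s n).
Proof.
move=> sL a; rewrite /morph_iter; elim: n => [|n IH] //=.
by rewrite (size_morph_word _ sL) IH expnS.
Qed.

End Morphisms.

Section Beta.
Variables (R : comNzRingType) (m : nat).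

Lemma beta_nil (j : 'I_m) : beta R [::] j = 0.
Proof. by rewrite /beta big_ord0. Qed.

Lemma beta_cons (x : 'I_m) W (j : 'I_m) :
  beta R (x :: W) j = (if x == j then 'X^(size W) else 0) + beta R W j.
Proof.
rewrite /beta /= big_mkcond big_ord_recl /= subn1 /= subn0.
congr (_ + _); rewrite [RHS]big_mkcond; apply: eq_bigr => i _ /=.
by rewrite add0n -subnDA add1n.
Qed.

Lemma beta_cat (u v : seq 'I_m) (j : 'I_m) :
  beta R (u ++ v) j = beta R u j * 'X^(size v) + beta R v j.
Proof.
elim: u => [|x u IH] /=; first by rewrite beta_nil mul0r add0r.
rewrite !beta_cons IH mulrDl addrA; congr (_ + _).
case: (x == j); last by rewrite mul0r add0r.
by rewrite -exprD size_cat addnC.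
Qed.

Lemma beta_morph_word (tau : morph m) L W (j : 'I_m) : uniform L tau ->
  beta R (morph_word tau W) j =
  \sum_k ((beta R W k \Po 'X^L) * beta R (tau k) j).
Proof.
move=> tauL; elim: W => [|x W IH].
  rewrite /morph_word /= beta_nil big1 // => k _.
  by rewrite beta_nil comp_poly0 mul0r.
rewrite /morph_word /= -/(morph_word tau W) beta_cat IH.
rewrite (size_morph_word W tauL).
under eq_bigr => k _ do rewrite beta_cons comp_polyD mulrDl.
rewrite big_split /=; congr (_ + _).
rewrite (bigD1 x) //= eqxx big1 ?addr0; first by rewrite comp_Xn_poly -exprM mulrC.
by move=> k; rewrite eq_sym => /negbTE ->; rewrite comp_poly0 mul0r.
Qed.

Lemma Mmorph_iter0 (s : morph m) : Mmorph R (morph_iter s 0) = 1%:M.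
Proof.
apply/matrixP => a j; rewrite !mxE /morph_iter /= beta_cons beta_nil addr0.
by rewrite eq_sym; case: (j == a).
Qed.

Lemma Mmorph_iterS (s : morph m) L n : uniform L s ->
  Mmorph R (morph_iter s n.+1) =
  mx_subst (L ^ n) (Mmorph R s) *m Mmorph R (morph_iter s n).
Proof.
move=> sL; apply/matrixP => a j; rewrite !mxE morph_iterSr.
rewrite (beta_morph_word _ _ (uniform_morph_iter n sL)).
by apply: eq_bigr => k _; rewrite !mxE.
Qed.

Lemma MprodS L n (s : morph m) :
  Mprod R L n.+1 s = mx_subst (L ^ n) (Mmorph R s) *m Mprod R L n s.
Proof. by rewrite /Mprod -addn1 iotaD rev_cat. Qed.

Lemma Mmorph_iter_uniform (s : morph m) L n : uniform L s ->
  Mmorph R (morph_iter s n) = Mprod R L n s.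
Proof.
move=> sL; elim: n => [|n IH]; first exact: Mmorph_iter0.
by rewrite (Mmorph_iterS _ sL) MprodS IH.
Qed.

End Beta.

Theorem corollary4p12 (p : nat) (Hp : prime p) (m : nat) (sigma : morph m)
  (Hsigma : uniform p sigma) (n : nat) (Hn : (0 < n)%N) :
  Mmorph 'F_p (morph_iter sigma n) = Mprod 'F_p p n sigma.
Proof. exact: Mmorph_iter_uniform. Qed.
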